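(* Let $(R,\mathfrak{m})$ be a commutative Artinian local ring with identity, $\mathfrak{m}\neq0$ and $\mathfrak{m}^2=0$. For every positive integer $n$, $n-1\notin L(x^n)$; and if $n$ is odd, then $2\notin L(x^n)$.
   Context: A nonunit polynomial in $R[x]$ is irreducible if in any factorization into two polynomials one factor is a unit of $R[x]$. A positive integer $k$ is a length of $f\in R[x]$ if $f$ is a product of $k$ irreducible polynomials of $R[x]$; $L(f)$ denotes the set of lengths of $f$. *)

From HB Require Import structures.
From mathcomp Require Import all_boot all_order all_algebra.
Set Implicit Arguments. Unset Strict Implicit. Unset Printing Implicit Defensive.
Import GRing.Theory.
Local Open Scope ring_scope.

Section Ideals.
Variable R : comUnitRingType.

Definition is_ideal (I : R -> Prop) : Prop :=
  [/\ I 0, (forall x y, I x -> I y -> I (x + y)),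
      (forall x, I x -> I (- x)) & (forall r x, I x -> I (r * x))].

Definition is_max_ideal (I : R -> Prop) : Prop :=
  [/\ is_ideal I, ~ I 1 &
      (forall J, is_ideal J -> (forall x, I x -> J x) -> ~ J 1 ->
         forall x, J x -> I x)].

Definition local_with_max (m : R -> Prop) : Prop :=
  is_max_ideal m /\ (forall J, is_max_ideal J -> forall x, J x <-> m x).

Definition artinian : Prop :=
  forall I : nat -> R -> Prop, (forall n, is_ideal (I n)) ->
    (forall n x, I n.+1 x -> I n x) ->
    exists N, forall n, (N <= n)%N -> forall x, I n x <-> I N x.

End Ideals.

Section Lengths.
Variable R : comUnitRingType.

Definition poly_unit (p : {poly R}) : Prop := exists q : {poly R}, p * q = 1.

Definition poly_irr (f : {poly R}) : Prop :=
  ~ poly_unit f /\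
  (forall g h : {poly R}, f = g * h -> poly_unit g \/ poly_unit h).

Definition is_length (f : {poly R}) (k : nat) : Prop :=
  (0 < k)%N /\ exists s : seq {poly R},
    [/\ size s = k, (forall p, p \in s -> poly_irr p) & f = \prod_(p <- s) p].

End Lengths.

From Pilot Require Import Defs.
From HB Require Import structures.
From mathcomp Require Import all_boot all_order all_algebra.
From mathcomp Require Import ring zify.
Set Implicit Arguments. Unset Strict Implicit. Unset Printing Implicit Defensive.
Import GRing.Theory.
Local Open Scope ring_scope.

(* Since m^2 = 0, m is exactly the set of nonunits of R. Modulo m, a
   factorization x^n = f_1 ... f_k becomes one over the residue field, so each
   f_i reduces to a unit times x^(a_i), with a_i > 0 as f_i is not a unit and
   a_1 + ... + a_k = n. Without forming R/m, this is read off the lowest and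
   highest indices of unit coefficients, which are both additive.
   An irreducible f with a >= 2 has f(0) <> 0 (otherwise f = x g), and then
   f g = x^n is impossible whenever g has reduced order b < n and vanishing
   coefficients below b - a + 1, as the coefficient of x^b in f g is f(0) g_b.
   With n - 1 factors one a_i is 2 and the others are 1, and a product of r
   polynomials with constant terms in m vanishes below degree r - 1; with two
   factors and n odd the a_i differ. *)

Lemma leq_sum_seq_eq (I : eqType) (s : seq I) (F G : I -> nat) :
  {in s, forall i, F i <= G i}%N ->
  (\sum_(i <- s) F i = \sum_(i <- s) G i)%N -> {in s, forall i, F i = G i}.
Proof.
move=> leFG eqFG i si.
have : (\sum_(j <- s | j \in s) (G j - F j) == 0)%N.
  by rewrite sumnB // -!big_seq eqFG subnn.
rewrite sum_nat_seq_eq0 => /allP/(_ i si); rewrite si subn_eq0 => leGF.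
by apply/eqP; rewrite eqn_leq leFG.
Qed.

Lemma sum_pos_eq_size_succ (I : eqType) (s : seq I) (f : I -> nat) :
  {in s, forall i, 0 < f i}%N -> (\sum_(i <- s) f i = (size s).+1)%N ->
  exists2 i, i \in s & f i = 2%N /\ {in rem i s, forall j, f j = 1%N}.
Proof.
move=> f_gt0 sum_f.
have /hasP [i si f_gt1] : has (fun i => 1 < f i)%N s.
  apply: contraT => /hasPn f_le1.
  suff : (\sum_(i <- s | i \in s) f i <= \sum_(i <- s | i \in s) 1)%N.
    by rewrite -!big_seq sum1_size sum_f ltnn.
  by apply: leq_sum => j /f_le1; rewrite -leqNgt.
have rem_s j : j \in rem i s -> j \in s by apply: mem_rem.
have s_gt0 : (0 < size s)%N by case: (s) si.
have size_rem_s := size_rem si.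
rewrite (big_rem _ si) /= in sum_f.
have rem_ge : (\sum_(j <- rem i s | j \in rem i s) 1 <=
               \sum_(j <- rem i s | j \in rem i s) f j)%N.
  by apply: leq_sum => j /rem_s /f_gt0.
rewrite -!big_seq sum1_size in rem_ge.
have f_i2 : f i = 2%N by lia.
exists i => //; split => // j j_rem; symmetry; apply: leq_sum_seq_eq j j_rem.
- by move=> j /rem_s /f_gt0.
- by rewrite sum1_size; lia.
Qed.

Section IdealClosure.
Variables (R : comUnitRingType) (m : R -> Prop).
Hypothesis m_ideal : is_ideal m.

Lemma ideal0 : m 0. Proof. by case: m_ideal. Qed.

Lemma idealD x y : m x -> m y -> m (x + y).
Proof. by case: m_ideal => _ mD _ _; apply: mD. Qed.

Lemma idealN x : m x -> m (- x).
Proof. by case: m_ideal => _ _ mN _; apply: mN. Qed.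

Lemma idealMl r x : m x -> m (r * x).
Proof. by case: m_ideal => _ _ _ mM; apply: mM. Qed.

Lemma idealMr r x : m x -> m (x * r).
Proof. by rewrite mulrC; apply: idealMl. Qed.

Lemma ideal_sum (I : Type) (r : seq I) (P : pred I) (F : I -> R) :
  (forall i, P i -> m (F i)) -> m (\sum_(i <- r | P i) F i).
Proof. by move=> mF; apply: big_ind => //; [exact: ideal0 | exact: idealD]. Qed.

End IdealClosure.

Section SquareZeroMaximalIdeal.
Variables (R : comUnitRingType) (m : R -> Prop).
Hypothesis m_max : is_max_ideal m.
Hypothesis m_sq0 : forall x y, m x -> m y -> x * y = 0.

Lemma sq0_unit_subr t : m t -> (1 - t) \is a GRing.unit.
Proof.
move=> mt; apply/unitrPr; exists (1 + t).
have -> : (1 - t) * (1 + t) = 1 - t * t by ring.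
by rewrite m_sq0 // subr0.
Qed.

(* For a nonunit x the ideal m + R x is proper: t + r x = 1 with t in m
   would make r x = 1 - t a unit. *)
Lemma sq0_max_ideal_nonunit x : m x <-> x \isn't a GRing.unit.
Proof.
have [m_ideal m_proper m_maximal] := m_max.
split=> [mx | /negbTE x_nunit].
  apply: contra_notN m_proper => x_unit.
  by rewrite -(mulVr x_unit); apply: idealMl.
pose J y := exists t r, m t /\ y = t + r * x.
have J_ideal : is_ideal J.
  split.
  - by exists 0, 0; rewrite mul0r addr0; split => //; apply: ideal0.
  - move=> _ _ [t1 [r1 [mt1 ->]]] [t2 [r2 [mt2 ->]]].
    by exists (t1 + t2), (r1 + r2); split; [exact: idealD | ring].
  - move=> _ [t [r [mt ->]]].
    by exists (- t), (- r); split; [exact: idealN | ring].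
  - move=> a _ [t [r [mt ->]]].
    by exists (a * t), (a * r); split; [exact: idealMl | ring].
apply: (m_maximal J J_ideal).
- by move=> y my; exists y, 0; rewrite mul0r addr0.
- move=> [t [r [mt J1]]].
  have : (r * x) \is a GRing.unit.
    have -> : r * x = 1 - t by rewrite J1; ring.
    exact: sq0_unit_subr.
  by rewrite unitrM x_nunit andbF.
- by exists 0, 1; rewrite mul1r add0r; split => //; apply: ideal0.
Qed.

End SquareZeroMaximalIdeal.

(* Modulo the maximal ideal of a local ring, [redord p] and [reddeg p] are the
   x-adic order and the degree of the reduction of [p], and [has_unit_coef p]
   says that this reduction is nonzero. *)
Section ReducedOrderDegree.
Variable R : comUnitRingType.
Implicit Types p q : {poly R}.

Definition has_unit_coef p : bool := has (fun c => c \is a GRing.unit) p.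
Definition redord p : nat := find (fun c => c \is a GRing.unit) p.
Definition reddeg p : nat := (\max_(j < size p | (p`_j \is a GRing.unit)%R) j)%N.

Lemma unit_coef_lt_size p j : p`_j \is a GRing.unit -> (j < size p)%N.
Proof. by apply: contraTT; rewrite -leqNgt => /(nth_default 0) ->; rewrite unitr0. Qed.

Lemma has_unit_coefP p : reflect (exists j, p`_j \is a GRing.unit) (has_unit_coef p).
Proof.
apply: (iffP (has_nthP 0)) => [[j _ pj] | [j pj]]; first by exists j.
by exists j => //; apply: unit_coef_lt_size.
Qed.

Lemma redord_unit p : has_unit_coef p -> p`_(redord p) \is a GRing.unit.
Proof. exact: nth_find. Qed.

Lemma redord_min p j : p`_j \is a GRing.unit -> (redord p <= j)%N.
Proof. by rewrite leqNgt; apply: contraL => /(before_find 0) ->. Qed.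

Lemma reddeg_max p j : p`_j \is a GRing.unit -> (j <= reddeg p)%N.
Proof.
move=> pj; have j_lt := unit_coef_lt_size pj.
exact: (@leq_bigmax_cond _ (fun i : 'I_(size p) => p`_i \is a GRing.unit)
          (fun i => nat_of_ord i) (Ordinal j_lt)).
Qed.

Lemma reddeg_unit p : has_unit_coef p -> p`_(reddeg p) \is a GRing.unit.
Proof.
case/has_unit_coefP => j pj; have j_lt := unit_coef_lt_size pj.
by rewrite /reddeg (bigmax_eq_arg (Ordinal j_lt)) //; case: arg_maxnP.
Qed.

Lemma redord_le_reddeg p : has_unit_coef p -> (redord p <= reddeg p)%N.
Proof. by move/reddeg_unit/redord_min. Qed.

End ReducedOrderDegree.

Section LocalRing.
Variables (R : comUnitRingType) (m : R -> Prop).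
Hypothesis m_ideal : is_ideal m.
Hypothesis m_nonunit : forall x, m x <-> x \isn't a GRing.unit.
Implicit Types p q : {poly R}.

Lemma unitrD_ideal u t : u \is a GRing.unit -> m t -> (u + t) \is a GRing.unit.
Proof.
move=> u_unit mt; apply: contraT => /m_nonunit m_ut.
have mu : m u.
  by rewrite (_ : u = (u + t) + - t); [apply: idealD; last apply: idealN | ring].
by move/m_nonunit: mu; rewrite u_unit.
Qed.

Lemma coefM_ideal p q k :
  (forall i, (i <= k)%N -> m p`_i \/ m q`_(k - i)) -> m (p * q)`_k.
Proof.
rewrite coefM => mpq; apply: ideal_sum => // i _.
by have [|] := mpq i (ltn_ord i); [apply: idealMr | apply: idealMl].
Qed.

Lemma coefM_unit p q a b :
  p`_a \is a GRing.unit -> q`_b \is a GRing.unit ->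
  (forall i, (i <= a + b)%N -> i != a -> m p`_i \/ m q`_(a + b - i)) ->
  (p * q)`_(a + b) \is a GRing.unit.
Proof.
move=> pa qb mpq; have a_lt : (a < (a + b).+1)%N by rewrite ltnS leq_addr.
rewrite coefM (bigD1 (Ordinal a_lt)) //= addKn.
apply: unitrD_ideal; first by rewrite unitrM pa qb.
apply: ideal_sum => // i i_neq.
have i_neqa : nat_of_ord i != a by apply: contra i_neq => /eqP ia; apply/eqP/val_inj.
by have [|] := mpq i (ltn_ord i) i_neqa; [apply: idealMr | apply: idealMl].
Qed.

Lemma has_unit_coefPn p : ~~ has_unit_coef p <-> forall j, m p`_j.
Proof.
split=> [p_nunit j | mp].
  by apply/m_nonunit; apply: contra p_nunit => pj; apply/has_unit_coefP; exists j.
by apply/has_unit_coefP => -[j]; apply/negP/m_nonunit.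
Qed.

Lemma coef_lt_redord p j : (j < redord p)%N -> m p`_j.
Proof. by move/(before_find 0) => pj; apply/m_nonunit/negbT. Qed.

Lemma coef_gt_reddeg p j : (reddeg p < j)%N -> m p`_j.
Proof. by move=> j_gt; apply/m_nonunit; apply: contraL j_gt => /reddeg_max; rewrite -leqNgt. Qed.

Lemma redordE p a :
  p`_a \is a GRing.unit -> (forall j, (j < a)%N -> m p`_j) -> redord p = a.
Proof.
move=> pa mp; apply/eqP; rewrite eqn_leq redord_min //= leqNgt.
apply/negP => /mp/m_nonunit; rewrite redord_unit //.
by apply/has_unit_coefP; exists a.
Qed.

Lemma reddegE p a :
  p`_a \is a GRing.unit -> (forall j, (a < j)%N -> m p`_j) -> reddeg p = a.
Proof.
move=> pa mp; apply/eqP; rewrite eqn_leq reddeg_max // andbT leqNgt.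
apply/negP => /mp/m_nonunit; rewrite reddeg_unit //.
by apply/has_unit_coefP; exists a.
Qed.

Lemma coef_redordM_unit p q : has_unit_coef p -> has_unit_coef q ->
  (p * q)`_(redord p + redord q) \is a GRing.unit.
Proof.
move=> p_unit q_unit; apply: coefM_unit; try exact: redord_unit.
move=> i i_le; case: ltngtP => // [i_lt | i_gt] _; first by left; apply: coef_lt_redord.
by right; apply: coef_lt_redord; lia.
Qed.

Lemma has_unit_coefM p q :
  has_unit_coef p -> has_unit_coef q -> has_unit_coef (p * q).
Proof.
by move=> p_unit q_unit; apply/has_unit_coefP; exists (redord p + redord q)%N;
  apply: coef_redordM_unit.
Qed.

Lemma redordM p q : has_unit_coef p -> has_unit_coef q ->
  redord (p * q) = (redord p + redord q)%N.
Proof.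
move=> p_unit q_unit; apply: redordE; first exact: coef_redordM_unit.
move=> j j_lt; apply: coefM_ideal => i i_le.
by case: (ltnP i (redord p)) => i_a; [left | right]; apply: coef_lt_redord; lia.
Qed.

Lemma reddegM p q : has_unit_coef p -> has_unit_coef q ->
  reddeg (p * q) = (reddeg p + reddeg q)%N.
Proof.
move=> p_unit q_unit; apply: reddegE.
  apply: coefM_unit; try exact: reddeg_unit.
  move=> i _; case: ltngtP => // [i_lt | i_gt] _; last by left; apply: coef_gt_reddeg.
  by right; apply: coef_gt_reddeg; lia.
move=> j j_gt; apply: coefM_ideal => i i_le.
by case: (leqP i (reddeg p)) => i_a; [right | left]; apply: coef_gt_reddeg; lia.
Qed.

Lemma has_unit_coefMl p q : has_unit_coef (p * q) -> has_unit_coef p.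
Proof.
apply: contraTT => /has_unit_coefPn mp; apply/has_unit_coefPn => j.
by apply: coefM_ideal => i _; left.
Qed.

Lemma has_unit_coef1 : has_unit_coef (1 : {poly R}).
Proof. by apply/has_unit_coefP; exists 0%N; rewrite coef1 unitr1. Qed.

Lemma redord1 : redord (1 : {poly R}) = 0%N.
Proof. by apply/eqP; rewrite -leqn0 redord_min // coef1 unitr1. Qed.

Lemma reddeg1 : reddeg (1 : {poly R}) = 0%N.
Proof.
apply: reddegE => [|j j_gt]; first by rewrite coef1 unitr1.
by rewrite coef1 gtn_eqF //; apply: ideal0.
Qed.

Lemma has_unit_coef_prod s :
  {in s, forall p, has_unit_coef p} -> has_unit_coef (\prod_(p <- s) p).
Proof.
move=> s_unit; rewrite big_seq; apply: (big_ind (@has_unit_coef R)) => //.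
  exact: has_unit_coef1.
exact: has_unit_coefM.
Qed.

Lemma redord_prod s : {in s, forall p, has_unit_coef p} ->
  redord (\prod_(p <- s) p) = (\sum_(p <- s) redord p)%N.
Proof.
elim: s => [|p s IH]; first by rewrite !big_nil redord1.
move=> /forall_cons [p_unit s_unit].
by rewrite !big_cons redordM ?IH ?has_unit_coef_prod.
Qed.

Lemma reddeg_prod s : {in s, forall p, has_unit_coef p} ->
  reddeg (\prod_(p <- s) p) = (\sum_(p <- s) reddeg p)%N.
Proof.
elim: s => [|p s IH]; first by rewrite !big_nil reddeg1.
move=> /forall_cons [p_unit s_unit].
by rewrite !big_cons reddegM ?IH ?has_unit_coef_prod.
Qed.

Lemma has_unit_coefXn n : has_unit_coef ('X^n : {poly R}).
Proof. by apply/has_unit_coefP; exists n; rewrite coefXn eqxx unitr1. Qed.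

Lemma redordXn n : redord ('X^n : {poly R}) = n.
Proof.
apply: redordE => [|j j_lt]; first by rewrite coefXn eqxx unitr1.
by rewrite coefXn ltn_eqF //; apply: ideal0.
Qed.

Lemma reddegXn n : reddeg ('X^n : {poly R}) = n.
Proof.
apply: reddegE => [|j j_gt]; first by rewrite coefXn eqxx unitr1.
by rewrite coefXn gtn_eqF //; apply: ideal0.
Qed.

Lemma poly_unit_redord p : Defs.poly_unit p -> has_unit_coef p /\ redord p = 0%N.
Proof.
move=> [q pq1]; have p_unit : has_unit_coef p.
  by apply: (@has_unit_coefMl p q); rewrite pq1 has_unit_coef1.
have q_unit : has_unit_coef q.
  by apply: (@has_unit_coefMl q p); rewrite mulrC pq1 has_unit_coef1.
by split=> //; have := redordM p_unit q_unit; rewrite pq1 redord1; lia.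
Qed.

(* If p(0) = 0 then p = q x with redord q = redord p - 1 > 0, so neither
   factor is a unit. *)
Lemma poly_irr_coef0 p : poly_irr p -> has_unit_coef p ->
  (1 < redord p)%N -> p`_0 != 0.
Proof.
move=> [p_nunit p_irr] p_unit p_ord; apply/eqP => p0.
have p_eq : p = drop_poly 1 p * 'X^1.
  by apply/polyP => -[|j]; rewrite expr1 coefMX coef_drop_poly //= addn1.
have q_unit : has_unit_coef (drop_poly 1 p).
  by apply: (@has_unit_coefMl _ 'X^1); rewrite -p_eq.
have := redordM q_unit (has_unit_coefXn 1); rewrite -p_eq redordXn => p_ord_eq.
case: (p_irr _ _ p_eq) => /poly_unit_redord [_]; first by lia.
by rewrite redordXn.
Qed.

Hypothesis m_sq0 : forall x y, m x -> m y -> x * y = 0.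

(* p = c + N with c = p(0) a unit and N ^+ 2 = 0, so c^-1 (1 - c^-1 N) is an
   inverse of p. *)
Lemma poly_unit_coef0 p : p`_0 \is a GRing.unit ->
  (forall j, (0 < j)%N -> m p`_j) -> Defs.poly_unit p.
Proof.
set c := p`_0 => c_unit mp; set N := p - c%:P.
have mN j : m N`_j.
  rewrite /N coefB coefC; case: j => [|j] /=; first by rewrite subrr; apply: ideal0.
  by rewrite subr0; apply: mp.
have NN : N * N = 0.
  by apply/polyP => j; rewrite coef0 coefM big1 // => i _; apply: m_sq0.
have cc : c%:P * c^-1%:P = 1 :> {poly R} by rewrite -polyCM mulrV.
exists (c^-1%:P * (1 - c^-1%:P * N)).
have -> : p = c%:P + N by rewrite /N; ring.
have -> : (c%:P + N) * (c^-1%:P * (1 - c^-1%:P * N)) =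
   c%:P * c^-1%:P * (1 - c^-1%:P * N) + c^-1%:P * N - c^-1%:P * c^-1%:P * (N * N).
  by ring.
by rewrite cc NN; ring.
Qed.

Lemma poly_irr_redord_gt0 p : poly_irr p -> has_unit_coef p ->
  redord p = reddeg p -> (0 < redord p)%N.
Proof.
move=> [p_nunit _] p_unit ord_deg; rewrite lt0n.
apply: contra_notN p_nunit => /eqP ord0; apply: poly_unit_coef0.
  by have := redord_unit p_unit; rewrite ord0.
by move=> j j_gt; apply: coef_gt_reddeg; rewrite // -ord_deg ord0.
Qed.

Lemma coefM_sq0 p q a b : (forall i, (i < a)%N -> m p`_i) ->
  (forall j, (j < b)%N -> m q`_j) -> (forall j, (j + a <= b)%N -> q`_j = 0) ->
  (p * q)`_b = p`_0 * q`_b.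
Proof.
move=> mp mq q0; rewrite coefM big_ord_recl subn0 big1 ?addr0 // => i _.
have i_lt := ltn_ord i; rewrite lift0.
case: (ltnP i.+1 a) => i_a; first by apply: m_sq0; [apply: mp | apply: mq; lia].
by rewrite q0 ?mulr0 //; lia.
Qed.

Lemma Xn_neq_irrM p q n : poly_irr p -> has_unit_coef p -> has_unit_coef q ->
  (1 < redord p)%N -> (forall j, (j + redord p <= redord q)%N -> q`_j = 0) ->
  (redord q < n)%N -> 'X^n != p * q.
Proof.
move=> p_irr p_unit q_unit p_ord q0 q_ord; apply/eqP => Xn_eq.
have p0q : p`_0 * q`_(redord q) = 0.
  by rewrite -(coefM_sq0 (@coef_lt_redord p) (@coef_lt_redord q) q0)
     -Xn_eq coefXn ltn_eqF.
move/eqP: (poly_irr_coef0 p_irr p_unit p_ord); apply.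
by rewrite -(mulrK (redord_unit q_unit) p`_0) p0q mul0r.
Qed.

Lemma coef_prod_ideal (s : seq {poly R}) : {in s, forall q, m q`_0} ->
  forall j, (j < size s)%N -> m (\prod_(q <- s) q)`_j.
Proof.
elim: s => [|q s IH] // /forall_cons [mq0 ms] j /= j_lt.
rewrite big_cons; apply: coefM_ideal => // -[|i] i_le; [left | right] => //.
by apply: IH => //; lia.
Qed.

Lemma coef_prod_sq0 (s : seq {poly R}) : {in s, forall q, m q`_0} ->
  forall j, (j.+1 < size s)%N -> (\prod_(q <- s) q)`_j = 0.
Proof.
elim: s => [|q s IH] // /forall_cons [mq0 ms] j /= j_lt.
rewrite big_cons coefM big1 // => -[[|i] i_lt] _ /=.
  by rewrite subn0; apply: m_sq0 => //; apply: coef_prod_ideal.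
by rewrite IH ?mulr0 //; lia.
Qed.

Lemma Xn_irr_factors n (s : seq {poly R}) : {in s, forall p, poly_irr p} ->
  'X^n = \prod_(p <- s) p ->
  {in s, forall p, has_unit_coef p /\ (0 < redord p)%N} /\
  (\sum_(p <- s) redord p)%N = n.
Proof.
move=> s_irr Xn_eq.
have s_unit : {in s, forall p, has_unit_coef p}.
  move=> p ps; apply: (@has_unit_coefMl p (\prod_(q <- rem p s) q)).
  by have := has_unit_coefXn n; rewrite Xn_eq (big_rem _ ps).
have ord_deg : {in s, forall p, redord p = reddeg p}.
  apply: leq_sum_seq_eq => [p /s_unit | ]; first exact: redord_le_reddeg.
  by rewrite -redord_prod // -reddeg_prod // -Xn_eq redordXn reddegXn.
split; last by rewrite -redord_prod // -Xn_eq redordXn.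
move=> p ps; split; first exact: s_unit.
by apply: poly_irr_redord_gt0; [apply: s_irr | apply: s_unit | apply: ord_deg].
Qed.

Lemma Xn_length_pred n : ~ is_length ('X^n : {poly R}) n.-1.
Proof.
move=> [len_gt0 [s [size_s s_irr Xn_eq]]].
have [s_ord sum_ord] := Xn_irr_factors s_irr Xn_eq.
have [p ps [p_ord rem_ord]] : exists2 p, p \in s &
    redord p = 2%N /\ {in rem p s, forall q, redord q = 1%N}.
  by apply: sum_pos_eq_size_succ => [q /s_ord [] | ] //; rewrite sum_ord size_s; lia.
have rem_s q : q \in rem p s -> q \in s by apply: mem_rem.
have [p_unit _] := s_ord p ps.
have rem_unit : {in rem p s, forall q, has_unit_coef q}.
  by move=> q /rem_s /s_ord [].
have Q_ord : redord (\prod_(q <- rem p s) q) = size (rem p s).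
  by rewrite redord_prod // -sum1_size; apply: eq_big_seq => q /rem_ord.
have size_rem_s := size_rem ps.
suff /negP[] : 'X^n != p * \prod_(q <- rem p s) q by rewrite Xn_eq (big_rem _ ps).
apply: Xn_neq_irrM (s_irr p ps) p_unit (has_unit_coef_prod rem_unit) _ _ _.
- by rewrite p_ord.
- rewrite p_ord Q_ord => j j_le; apply: coef_prod_sq0; last by rewrite -addn2.
  by move=> q /rem_ord q_ord; apply: coef_lt_redord; rewrite q_ord.
- by rewrite Q_ord size_rem_s size_s; lia.
Qed.

Lemma Xn_odd_length2 n : odd n -> ~ is_length ('X^n : {poly R}) 2.
Proof.
move=> n_odd [_ [s [size_s s_irr Xn_eq]]].
case: s size_s s_irr Xn_eq => [|p [|q []]] // _ s_irr Xn_eq.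
have [s_ord sum_ord] := Xn_irr_factors s_irr Xn_eq.
rewrite !big_cons big_nil mulr1 in Xn_eq.
rewrite !big_cons big_nil addn0 in sum_ord.
have [p_unit p_ord] := s_ord p (mem_head _ _).
have [q_unit q_ord] : has_unit_coef q /\ (0 < redord q)%N.
  by apply: s_ord; rewrite !inE eqxx orbT.
case: (ltngtP (redord p) (redord q)) => [pq | qp | pq].
- suff /negP[] : 'X^n != q * p by rewrite Xn_eq mulrC.
  apply: Xn_neq_irrM _ q_unit p_unit _ _ _; try lia.
  by apply: s_irr; rewrite !inE eqxx orbT.
- suff /negP[] : 'X^n != p * q by rewrite Xn_eq.
  by apply: Xn_neq_irrM (s_irr p (mem_head _ _)) p_unit q_unit _ _ _; lia.
- by move: n_odd; rewrite -sum_ord pq addnn odd_double.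
Qed.

End LocalRing.

Theorem lemma4p4 (R : comUnitRingType) (m : R -> Prop) :
  artinian R -> local_with_max m ->
  (exists x, m x /\ x <> 0) ->
  (forall x y, m x -> m y -> x * y = 0) ->
  forall n : nat, (0 < n)%N ->
    ~ is_length ('X^n : {poly R}) n.-1 /\
    (odd n -> ~ is_length ('X^n : {poly R}) 2).
Proof.
move=> _ [m_max _] _ m_sq0 n _.
have [m_ideal _ _] := m_max.
have m_nonunit := sq0_max_ideal_nonunit m_max m_sq0.
split; first exact: Xn_length_pred m_ideal m_nonunit m_sq0 n.
exact: Xn_odd_length2 m_ideal m_nonunit m_sq0 n.
Qed.
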